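(* Let $L/K$ be a Galois extension of number fields with Galois group $G=\{\sigma_{g_1},\dots,\sigma_{g_n}\}$ and $R\subseteq S$ the rings of integers. For $1\le l\le n$ let $I_{g_l}=\{\sigma_{g_l},\sigma_{g_{l+1}},\dots,\sigma_{g_n}\}$, and let $P_l=(S\otimes_RS)/(S\otimes_RS)_{I_{g_l}^c}$. Then for $1\le i,j\le n$, $$[(S\otimes_RS)_{I_{g_j}^c}:(S\otimes_RS)_{I_{g_i}^c}]=(S\otimes_RS)_{I_{g_i}\cup I_{g_j}^c},$$ and the map $F:\operatorname{Hom}_{S\otimes_RS}(P_i,P_j)\to(S\otimes_RS)_{I_{g_i}\cup I_{g_j}^c}/(S\otimes_RS)_{I_{g_j}^c}$, $F(f)=f\big(1\otimes1+(S\otimes_RS)_{I_{g_i}^c}\big)$, is an isomorphism of $S\otimes_RS$-modules.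
   Context: $\phi_{g_k}:L\otimes_KL\to L$ is $l_1\otimes l_2\mapsto\sigma_{g_k}(l_1)l_2$, with $S\otimes_RS$ regarded as a subring of $L\otimes_KL$. For $I\subseteq G$, $(S\otimes_RS)_I=\{x\in S\otimes_RS:\phi_{g_k}(x)=0$ for all $k$ with $\sigma_{g_k}\notin I\}$, an ideal of $S\otimes_RS$; $I^c=G\setminus I$. For ideals $I,J$ of a commutative ring $T$, $[J:I]=\{x\in T:xI\subseteq J\}$. *)

From HB Require Import structures.
From mathcomp Require Import all_boot all_order all_algebra all_fingroup all_field.
Set Implicit Arguments. Unset Strict Implicit. Unset Printing Implicit Defensive.
Import GRing.Theory.
Local Open Scope ring_scope.

Definition integral_Z (A : nzRingType) (x : A) : Prop :=
  exists p : {poly int}, p \is monic /\ root (map_poly (fun z : int => z%:~R) p) x.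

Section Tensor.
Variables (K : fieldType) (L : splittingFieldType K) (n : nat)
          (g : 'I_n -> gal_of {:L}).

(* phi(l1 (x) l2) = (sigma_{g_k}(l1) l2)_k : the isomorphism L (x)_K L ~= L^G,
   with coordinate k being phi_{g_k}. *)
Definition phiT (a b : L) : {ffun 'I_n -> L} := [ffun k => g k a * b].

(* image of S (x)_R S inside L^G: finite sums of phi(a (x) b), a b in S *)
Definition SS (x : {ffun 'I_n -> L}) : Prop :=
  exists s : seq (L * L),
    (forall p, p \in s -> integral_Z p.1 /\ integral_Z p.2) /\
    x = \sum_(p <- s) phiT p.1 p.2.

(* (S (x)_R S)_I, with I a set of indices standing for {sigma_{g_k} | k in I} *)
Definition SSI (I : {set 'I_n}) (x : {ffun 'I_n -> L}) : Prop :=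
  SS x /\ forall k : 'I_n, k \notin I -> x k = 0.

(* I_{g_l} = {sigma_{g_l}, ..., sigma_{g_n}} (0-based index l) *)
Definition Igl (l : 'I_n) : {set 'I_n} := [set k : 'I_n | (l <= k)%N].

Definition colon (J I : {ffun 'I_n -> L} -> Prop) (x : {ffun 'I_n -> L}) : Prop :=
  SS x /\ forall y, I y -> J (x * y).

(* f (acting on representatives) induces an S(x)S-module homomorphism
   (S(x)S)/A -> (S(x)S)/B *)
Definition ishom (A B : {ffun 'I_n -> L} -> Prop)
    (f : {ffun 'I_n -> L} -> {ffun 'I_n -> L}) : Prop :=
  [/\ forall x, SS x -> SS (f x),
      forall x y, SS x -> SS y -> A (x - y) -> B (f x - f y),
      forall x y, SS x -> SS y -> B (f (x + y) - (f x + f y)) &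
      forall t x, SS t -> SS x -> B (f (t * x) - t * f x)].

(* two representatives induce the same homomorphism *)
Definition homeq (B : {ffun 'I_n -> L} -> Prop)
    (f f' : {ffun 'I_n -> L} -> {ffun 'I_n -> L}) : Prop :=
  forall x, SS x -> B (f x - f' x).

End Tensor.

From HB Require Import structures.
From mathcomp Require Import all_boot all_order all_algebra all_fingroup all_field.
From mathcomp Require Import algebraics_fundamentals.
From Stdlib Require Import Classical.

Set Implicit Arguments.
Unset Strict Implicit.
Unset Printing Implicit Defensive.

Import GRing.Theory.
Local Open Scope ring_scope.

(* Through phi, S (x)_R S is a subring of L^n and (S (x)_R S)_I consists of its
   elements supported in I.  Every element of L has a nonzero integer multiple
   in S, so two distinct automorphisms already differ at some a in S.  For
   such an a separating sigma_m from sigma_k, a (x) 1 - 1 (x) sigma_m(a)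
   vanishes at m but not at k; multiplying these over m in I shows that for
   k outside I some element of S (x)_R S vanishing on I is nonzero at k.  With
   such test elements the colon ideal is computed coordinatewise, and a module
   map P_i -> P_j is, modulo (S (x)_R S)_{I_j^c}, multiplication by f(1), which
   therefore lies in the colon ideal; conversely every element of the colon
   ideal defines such a map by multiplication. *)

Lemma integral_ZE (A : nzRingType) (x : A) :
  integral_Z x <-> integralOver (intr : int -> A) x.
Proof. by split => [[p [mp rp]]|[p mp rp]]; exists p. Qed.

Lemma rat_poly_common_denom (q : {poly rat}) :
  exists2 d : int, d != 0 & forall i, exists e : int, q`_i * d%:~R = e%:~R.
Proof.
exists (\prod_(j < size q) denq q`_j).
  by apply/prodf_neq0 => j _; rewrite denq_neq0.
move=> i; case: (ltnP i (size q)) => [lti|gei]; last first.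
  by exists 0; rewrite nth_default // mul0r.
rewrite (bigD1 (Ordinal lti)) //= rmorphM /= mulrA -numqE.
by exists (numq q`_i * \prod_(j < size q | j != Ordinal lti) denq q`_j); rewrite rmorphM.
Qed.

(* If d clears the denominators of the monic q of degree m, then d x is a root
   of the monic integral polynomial sum_i d^(m-i) q_i X^i. *)
Lemma integral_int_multiple {A : comNzRingType} {f : {rmorphism rat -> A}} [x : A] :
  integralOver f x -> exists2 d : int, d != 0 & integralOver intr (d%:~R * x).
Proof.
case=> q mq rq; have [d dn0 dq] := rat_poly_common_denom q.
exists d => //.
have sq : (0 < size q)%N by rewrite size_poly_gt0 monic_neq0.
set m := (size q).-1.
have qm : q`_m = 1 by have := monicP mq; rewrite lead_coefE.
have ltm i : (i < size q)%N -> (i <= m)%N by move=> lti; rewrite -ltnS prednK.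
pose r := \poly_(i < size q) (f q`_i * (d%:~R : A) ^+ (m - i)).
have rm : r`_m = 1 by rewrite coef_poly ltn_predL sq qm rmorph1 subnn mulr1.
have sr : size r = size q by apply: size_poly_eq; rewrite qm rmorph1 subnn mulr1 oner_neq0.
apply: (integral_root_monic (p := r)).
- by rewrite monicE lead_coefE sr rm.
- rewrite /root horner_poly.
  have -> : \sum_(i < size q) f q`_i * (d%:~R : A) ^+ (m - i) * (d%:~R * x) ^+ i
     = (d%:~R : A) ^+ m * (map_poly f q).[x].
    rewrite (horner_coef_wide _ (eq_leq (size_map_poly _ _))) mulr_sumr.
    apply: eq_bigr => i _; rewrite coef_map exprMn mulrA -(mulrA (f _)) -exprD.
    by rewrite subnK ?ltm // mulrCA mulrA.
  by rewrite (rootP rq) mulr0.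
- apply/integral_poly => i; rewrite coef_poly.
  case: ifP => [/ltm|_]; last exact: integral0.
  rewrite leq_eqVlt => /orP[/eqP ->|ltim].
    by rewrite qm rmorph1 subnn mulr1; apply: integral1.
  have [e de] := dq i.
  rewrite -(subnSK ltim) exprS mulrA.
  apply: integral_mul; last by rewrite -rmorphXn; apply: integral_id.
  by rewrite -(rmorph_int f d) -rmorphM de rmorph_int; apply: integral_id.
Qed.

Lemma fieldExt_int_multiple (F : fieldExtType rat) (x : F) :
  exists2 d : int, d != 0 & integral_Z (d%:~R * x).
Proof.
have [d dn0 dx] := integral_int_multiple (alg_integral x).
by exists d => //; apply/integral_ZE.
Qed.

Lemma fieldExt_intr_eq0 (F : fieldExtType rat) (d : int) : ((d%:~R : F) == 0) = (d == 0).
Proof. by rewrite -(rmorph_int (in_alg F)) fmorph_eq0 intr_eq0. Qed.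

Lemma integral_Z1 (A : nzRingType) : integral_Z (1 : A).
Proof. exact/integral_ZE/integral1. Qed.

Lemma integral_ZN (A : comNzRingType) (a : A) : integral_Z a -> integral_Z (- a).
Proof. by move/integral_ZE/integral_opp/integral_ZE. Qed.

Lemma integral_ZM (A : comNzRingType) (a b : A) :
  integral_Z a -> integral_Z b -> integral_Z (a * b).
Proof. by move=> /integral_ZE ha /integral_ZE hb; apply/integral_ZE/integral_mul. Qed.

Lemma integral_Z_rmorph (A B : nzRingType) (f : {rmorphism A -> B}) (a : A) :
  integral_Z a -> integral_Z (f a).
Proof.
move=> [p [mp rp]]; exists p; split => //.
have := rmorph_root f rp; rewrite -map_poly_comp.
by rewrite (eq_map_poly (g := fun z : int => z%:~R)) // => z /=; rewrite rmorph_int.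
Qed.

Section GaloisIntegral.
Variables (K : fieldExtType rat) (L : splittingFieldType K).

Lemma gal_neq_integral (s t : gal_of {:L}) :
  s != t -> exists2 a, integral_Z a & s a != t a.
Proof.
move=> st; apply: NNPP => noa; case/negP: st; apply/gal_eqP => x _.
have [d dn0 dx] := @fieldExt_int_multiple (baseFieldType L) x.
apply: (@mulfI _ (d%:~R : L)); first by rewrite (@fieldExt_intr_eq0 (baseFieldType L)).
have : s (d%:~R * x) == t (d%:~R * x).
  by apply/negPn/negP => ne; apply: noa; exists (d%:~R * x).
by rewrite !rmorphM !rmorph_int => /eqP.
Qed.

End GaloisIntegral.

Lemma ffun_mulrC (T : finType) (R : comNzRingType) (x y : {ffun T -> R}) :
  x * y = y * x.
Proof. by apply/ffunP => t; rewrite !ffunE mulrC. Qed.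

Section Tensor.
Variables (K : fieldExtType rat) (L : splittingFieldType K) (n : nat)
          (g : 'I_n -> gal_of {:L}).

Lemma phiTM a b c d : phiT g a b * phiT g c d = phiT g (a * c) (b * d).
Proof. by apply/ffunP => k; rewrite !ffunE rmorphM mulrACA. Qed.

Lemma phiTN a b : - phiT g a b = phiT g (- a) b.
Proof. by apply/ffunP => k; rewrite !ffunE rmorphN mulNr. Qed.

Lemma phiT11 : phiT g 1 1 = 1.
Proof. by apply/ffunP => k; rewrite !ffunE rmorph1 mulr1. Qed.

Lemma SS_phiT a b : integral_Z a -> integral_Z b -> SS g (phiT g a b).
Proof.
move=> ha hb; exists [:: (a, b)]; rewrite big_seq1; split => //.
by move=> p; rewrite inE => /eqP ->.
Qed.

Lemma SS0 : SS g 0.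
Proof. by exists [::]; rewrite big_nil. Qed.

Lemma SS1 : SS g 1.
Proof. by rewrite -phiT11; apply: SS_phiT; apply: integral_Z1. Qed.

Lemma SSD x y : SS g x -> SS g y -> SS g (x + y).
Proof.
move=> [s1 [h1 ->]] [s2 [h2 ->]]; exists (s1 ++ s2); rewrite big_cat; split => //.
by move=> p; rewrite mem_cat => /orP[/h1|/h2].
Qed.

Lemma SSN x : SS g x -> SS g (- x).
Proof.
move=> [s [h ->]]; exists [seq (- p.1, p.2) | p <- s]; split.
  by move=> p /mapP [q /h [h1 h2] ->]; split => //; apply: integral_ZN.
by rewrite big_map -sumrN; apply: eq_bigr => p _; rewrite phiTN.
Qed.

Lemma SSB x y : SS g x -> SS g y -> SS g (x - y).
Proof. by move=> hx hy; apply: SSD => //; apply: SSN. Qed.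

Lemma SS_sum (T : eqType) (s : seq T) (F : T -> {ffun 'I_n -> L}) :
  (forall t, t \in s -> SS g (F t)) -> SS g (\sum_(t <- s) F t).
Proof.
elim: s => [|t s IH] h; first by rewrite big_nil; apply: SS0.
rewrite big_cons; apply: SSD; first by apply: h; rewrite inE eqxx.
by apply: IH => u hu; apply: h; rewrite inE hu orbT.
Qed.

Lemma SSM x y : SS g x -> SS g y -> SS g (x * y).
Proof.
move=> [s1 [h1 ->]] [s2 [h2 ->]]; rewrite mulr_suml; apply: SS_sum => p /h1 [hp1 hp2].
rewrite mulr_sumr; apply: SS_sum => q /h2 [hq1 hq2].
by rewrite phiTM; apply: SS_phiT; apply: integral_ZM.
Qed.

Lemma SSI0 (I : {set 'I_n}) : SSI g I 0.
Proof. by split; [apply: SS0 | move=> k _; rewrite ffunE]. Qed.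

Lemma SSID (I : {set 'I_n}) x y : SSI g I x -> SSI g I y -> SSI g I (x + y).
Proof.
by move=> [Sx x0] [Sy y0]; split=> [|k kI]; [apply: SSD | rewrite ffunE x0 ?y0 ?addr0].
Qed.

Lemma SSIN (I : {set 'I_n}) x : SSI g I x -> SSI g I (- x).
Proof. by move=> [Sx x0]; split=> [|k kI]; [apply: SSN | rewrite ffunE x0 ?oppr0]. Qed.

Lemma SSIB (I : {set 'I_n}) x y : SSI g I x -> SSI g I y -> SSI g I (x - y).
Proof. by move=> hx /SSIN; apply: SSID. Qed.

Lemma SSIM (I J : {set 'I_n}) x y :
  SSI g I x -> SSI g J y -> SSI g (I :&: J) (x * y).
Proof.
move=> [Sx x0] [Sy y0]; split=> [|k]; first exact: SSM.
by rewrite in_setI negb_and ffunE => /orP[/x0 ->|/y0 ->]; rewrite ?mul0r ?mulr0.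
Qed.

Lemma SSIMl (I : {set 'I_n}) t x : SS g t -> SSI g I x -> SSI g I (t * x).
Proof.
move=> St [Sx x0]; split=> [|k kI]; first exact: SSM.
by rewrite ffunE x0 ?mulr0.
Qed.

Lemma SSIS (I J : {set 'I_n}) x : I \subset J -> SSI g I x -> SSI g J x.
Proof.
by move=> /subsetP IJ [Sx x0]; split=> // k kJ; apply: x0; apply: contra kJ; apply: IJ.
Qed.

Hypothesis g_inj : injective g.

Lemma SS_separating (k : 'I_n) (s : seq 'I_n) : k \notin s ->
  exists y, [/\ SS g y, y k != 0 & forall m, m \in s -> y m = 0].
Proof.
elim: s => [|m s IH].
  by move=> _; exists 1; split=> //; [apply: SS1 | rewrite ffunE oner_neq0].
rewrite inE negb_or => /andP [km /IH [y [Sy yk ys]]].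
have gmk : g m != g k by rewrite (inj_eq g_inj) eq_sym.
have [a ha gma] := gal_neq_integral gmk.
exists (y * (phiT g a 1 - phiT g 1 (g m a))); split.
- have i1 := integral_Z1 L; have iga := integral_Z_rmorph (g m) ha.
  by apply: SSM => //; apply: SSB; apply: SS_phiT.
- by rewrite !ffunE rmorph1 mul1r mulr1 mulf_neq0 // subr_eq0 eq_sym.
- move=> m'; rewrite inE => /orP [/eqP ->|hm'].
    by rewrite !ffunE rmorph1 mul1r mulr1 subrr mulr0.
  by rewrite !ffunE ys // mul0r.
Qed.

Lemma SSI_nonzero_at (I : {set 'I_n}) (k : 'I_n) :
  k \notin I -> exists2 y, SSI g (~: I) y & y k != 0.
Proof.
move=> kI; have [|y [Sy yk y0]] := @SS_separating k (enum I); first by rewrite mem_enum.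
by exists y => //; split=> // m; rewrite in_setC negbK -mem_enum; apply: y0.
Qed.

Lemma colon_SSI (I J : {set 'I_n}) x :
  colon g (SSI g (~: J)) (SSI g (~: I)) x <-> SSI g (I :|: ~: J) x.
Proof.
split=> [[Sx xA]|xc].
  split=> // k; rewrite in_setU in_setC negb_or negbK => /andP [kI kJ].
  have [y Ay yk] := SSI_nonzero_at kI.
  have [_ /(_ k)] := xA y Ay; rewrite in_setC kJ ffunE => /(_ isT) /eqP.
  by rewrite mulf_eq0 (negbTE yk) orbF => /eqP.
split=> [|y Ay]; first by case: xc.
apply: SSIS (SSIM xc Ay).
by rewrite setIUl setICr set0U subsetIl.
Qed.

End Tensor.

Section Homomorphisms.
Variables (K : fieldExtType rat) (L : splittingFieldType K) (n : nat)
          (g : 'I_n -> gal_of {:L}) (I J : {set 'I_n}).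

Let A := SSI g I.
Let B := SSI g J.

Lemma ishom_map f y : ishom g A B f -> A y -> B (f y).
Proof.
move=> [Sf fw fD _] [Sy y0].
have f0 : B (f 0) by have := SSIN (fD 0 0 (SS0 g) (SS0 g)); rewrite addr0 opprB addrK.
by rewrite -[f y](subrK (f 0)); apply: SSID f0; apply: fw; rewrite ?subr0 //; apply: SS0.
Qed.

Lemma ishom_colon f : ishom g A B f -> colon g B A (f 1).
Proof.
move=> hf; have [Sf _ _ fM] := hf; split=> [|y Ay]; first exact/Sf/SS1.
have := SSIB (ishom_map hf Ay) (fM y 1 Ay.1 (SS1 g)).
by rewrite mulr1 opprB addrCA subrr addr0 ffun_mulrC.
Qed.

Lemma colon_ishom c : colon g B A c -> ishom g A B (fun x => x * c).
Proof.
move=> [Sc cA]; split=> [x Sx|x y Sx Sy Axy|x y _ _|t x _ _]; first exact: SSM.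
- by rewrite -mulrBl ffun_mulrC; apply: cA.
- by rewrite mulrDl subrr; apply: SSI0.
- by rewrite mulrA subrr; apply: SSI0.
Qed.

Lemma ishom_homeq f f' :
  ishom g A B f -> ishom g A B f' -> B (f 1 - f' 1) -> homeq g B f f'.
Proof.
move=> [_ _ _ fM] [_ _ _ f'M] d1 x Sx.
have := fM x 1 Sx (SS1 g); have := f'M x 1 Sx (SS1 g); rewrite !mulr1 => f'x fx.
suff -> : f x - f' x = (f x - x * f 1) - (f' x - x * f' 1) + x * (f 1 - f' 1).
  by apply: SSID; [apply: SSIB | apply: SSIMl].
by rewrite mulrBr opprB addrACA addrA subrK addrAC addrA subrK.
Qed.

End Homomorphisms.

Theorem mainTheorem12
  (K : fieldExtType rat) (L : splittingFieldType K)
  (HGal : galois (1%VS : {vspace L}) fullv)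
  (n : nat) (g : 'I_n -> gal_of {:L})
  (Hg_in : forall k, g k \in 'Gal({:L} / 1%VS)%g)
  (Hg_inj : injective g)
  (Hg_onto : forall s, s \in 'Gal({:L} / 1%VS)%g -> exists k, g k = s)
  (i j : 'I_n) :
  (forall x, colon g (SSI g (~: Igl j)) (SSI g (~: Igl i)) x
             <-> SSI g (Igl i :|: ~: Igl j) x)
  /\
  [/\ (* F is well defined: F(f) = f(1 (x) 1 + ...) lies in (S(x)S)_{I_i u I_j^c} *)
      forall f, ishom g (SSI g (~: Igl i)) (SSI g (~: Igl j)) f ->
        SSI g (Igl i :|: ~: Igl j) (f 1),
      (* F only depends on the homomorphism, not on the representative *)
      forall f f', ishom g (SSI g (~: Igl i)) (SSI g (~: Igl j)) f ->
        ishom g (SSI g (~: Igl i)) (SSI g (~: Igl j)) f' ->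
        homeq g (SSI g (~: Igl j)) f f' -> SSI g (~: Igl j) (f 1 - f' 1),
      (* F is injective *)
      forall f f', ishom g (SSI g (~: Igl i)) (SSI g (~: Igl j)) f ->
        ishom g (SSI g (~: Igl i)) (SSI g (~: Igl j)) f' ->
        SSI g (~: Igl j) (f 1 - f' 1) -> homeq g (SSI g (~: Igl j)) f f' &
      (* F is surjective *)
      forall c, SSI g (Igl i :|: ~: Igl j) c ->
        exists f, ishom g (SSI g (~: Igl i)) (SSI g (~: Igl j)) f /\
                  SSI g (~: Igl j) (f 1 - c)].
Proof.
have colonE := colon_SSI Hg_inj (Igl i) (Igl j).
split=> //; split.
- by move=> f /ishom_colon /colonE.
- by move=> f f' _ _; apply; apply: SS1.
- exact: ishom_homeq.
- move=> c /colonE /colon_ishom hc; exists (fun x => x * c); split=> //.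
  by rewrite mul1r subrr; apply: SSI0.
Qed.
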